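(* Let $p$ be an odd prime and let $G$ be a quasi-powerful $p$-group. For any $g,h\in G$ there exist $j\in G$ and $z\in Z(G)$ such that $g^{p}h^{p}=j^{p}z$.
   Context: For an odd prime $p$, a finite $p$-group $G$ is powerful if $[G,G]\le G^{p}$ (where $G^{p}=\langle g^p\mid g\in G\rangle$), and $G$ is quasi-powerful if $G/Z(G)$ is powerful. *)

From mathcomp Require Import all_boot all_fingroup all_solvable.
Set Implicit Arguments. Unset Strict Implicit. Unset Printing Implicit Defensive.
Local Open Scope group_scope.

Definition pow_subgroup (gT : finGroupType) (p : nat) (G : {set gT}) : {set gT} :=
  <<[set x ^+ p | x in G]>>.

Definition powerful (gT : finGroupType) (p : nat) (G : {set gT}) : bool :=
  [~: G, G] \subset pow_subgroup p G.

Definition quasi_powerful (gT : finGroupType) (p : nat) (G : {group gT}) : bool :=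
  powerful p (G / 'Z(G)).

From mathcomp Require Import all_boot all_fingroup all_solvable.
Set Implicit Arguments. Unset Strict Implicit. Unset Printing Implicit Defensive.
Local Open Scope group_scope.

(* For a p-group, pow_subgroup p G is 'Mho^1(G); let W := 'Mho^1('Mho^1(G)).
   If G is powerful and p is odd, then modulo W the subgroup 'Mho^1(G) has
   exponent p and is central (induction on |G| through G / 'Z(G)), so the p-th
   power map is multiplicative there, as p divides 'C(p, 2). Hence
   x^p y^p = w (xy)^p with w in W. By induction on |G|, W is the set of p-th
   powers of the proper powerful subgroup 'Mho^1(G), so w = u^p, and u^p (xy)^p
   is a p-th power in the powerful subgroup <xy> 'Mho^1(G), which is proper
   unless G is cyclic. The theorem is this fact for the powerful G / 'Z(G). *)

Lemma pow_subgroup_Mho (gT : finGroupType) (p : nat) (G : {group gT}) :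
  p.-group G -> pow_subgroup p G = 'Mho^1(G).
Proof. by move=> pG; rewrite (MhoE 1 pG) expn1. Qed.

Lemma quotient_Mho (gT : finGroupType) n (G H : {group gT}) :
  G \subset 'N(H) -> 'Mho^n(G) / H = 'Mho^n(G / H).
Proof. exact: morphim_Mho. Qed.

Lemma Mho1_proper (gT : finGroupType) (p : nat) (G : {group gT}) :
  p.-group G -> G :!=: 1 -> 'Mho^1(G) \proper G.
Proof.
move=> pG ntG; apply: sub_proper_trans (Phi_proper ntG).
by rewrite (Phi_joing pG) joing_subr.
Qed.

Lemma Mho1_eq1_expg (gT : finGroupType) (p : nat) (G : {group gT}) :
  p.-group G -> 'Mho^1(G) = 1 -> {in G, forall x, x ^+ p = 1}.
Proof.
move=> pG G1 x Gx; apply/set1gP; rewrite -G1 -[p]expn1.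
exact: Mho_p_elt Gx (mem_p_elt pG Gx).
Qed.

Lemma cycle_join_Mho1 (gT : finGroupType) (p : nat) (G : {group gT}) v :
  p.-group G -> <[v]> <*> 'Mho^1(G) = G -> <[v]> = G.
Proof.
move=> pG defG; rewrite -[<[v]>]genGid; apply: Phi_nongen.
apply/eqP; rewrite eqEsubset join_subG Phi_sub -{1 2}defG joing_subl /=.
rewrite join_subG joing_subr (subset_trans _ (joing_subl _ _)) //=.
by rewrite (Phi_joing pG) joing_subr.
Qed.

Section PowerfulGroups.

Variable p : nat.
Hypotheses (p_pr : prime p) (p_odd : odd p).

Lemma powerfulE (gT : finGroupType) (G : {group gT}) :
  p.-group G -> powerful p G = ([~: G, G] \subset 'Mho^1(G)).
Proof. by move=> pG; rewrite /powerful pow_subgroup_Mho. Qed.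

Lemma expgMp_Rcomm (gT : finGroupType) (x y : gT) :
  commute x [~ y, x] -> commute y [~ y, x] -> [~ y, x] ^+ p = 1 ->
  (x * y) ^+ p = x ^+ p * y ^+ p.
Proof.
move=> cx cy r1; rewrite expMg_Rmul //.
have /dvdnP[k ->] : p %| 'C(p, 2) by rewrite prime_dvd_bin ?odd_prime_gt2.
by rewrite mulnC expgM r1 expg1n mulg1.
Qed.

Lemma Mho1_central (gT : finGroupType) (G : {group gT}) :
  p.-group G -> powerful p G -> 'Mho^1('Mho^1(G)) = 1 -> 'Mho^1(G) \subset 'C(G).
Proof.
have [n leGn] := ubnP #|G|; elim: n gT G leGn => // n IHn gT G /ltnSE leGn.
move=> pG; rewrite powerfulE // => dG M2.
have [-> | ntG] := eqsVneq G 1; first by rewrite Mho1 sub1G.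
have nZG : G \subset 'N('Z(G)) := gFnorm _ G.
have ntZ : 'Z(G) :!=: 1 by rewrite center_nil_eq1 // (pgroup_nil pG).
have sMZ : [~: 'Mho^1(G), G] \subset 'Z(G).
  rewrite -quotient_cents2 ?gFsub_trans // quotient_Mho //.
  apply: IHn; rewrite ?quotient_pgroup //.
  - exact: leq_trans (ltn_quotient ntZ (center_sub G)) leGn.
  - by rewrite powerfulE ?quotient_pgroup // -quotientR // -quotient_Mho ?quotientS.
  - by rewrite -!quotient_Mho ?gFsub_trans // M2 quotient1.
have expM1 := Mho1_eq1_expg (pgroupS (Mho_sub 1 G) pG) M2.
rewrite (MhoE 1 pG) expn1 gen_subG; apply/subsetP=> _ /imsetP[x Gx ->].
apply/centP=> g Gg; apply/commgP/conjg_fixP; rewrite conjXg conjg_mulR.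
(* (x^g)^p = (x c)^p with c := [~ x, g], where [~ c, x] is central and
   'Mho^1(G) has exponent p. *)
set c := [~ x, g].
have Mc : c \in 'Mho^1(G) by rewrite (subsetP dG) ?mem_commg.
have Zcx : [~ c, x] \in 'Z(G) by rewrite (subsetP sMZ) ?mem_commg.
have Gc : c \in G := groupR Gx Gg.
rewrite expgMp_Rcomm ?(expM1 c) ?mulg1 //; first exact: centerC Gx _ Zcx.
  exact: centerC Gc _ Zcx.
by rewrite expM1 // (subsetP dG) ?mem_commg.
Qed.

Lemma quotient_powerful (gT : finGroupType) (G H : {group gT}) :
  p.-group G -> G \subset 'N(H) -> powerful p G -> powerful p (G / H).
Proof.
move=> pG nHG; rewrite !powerfulE ?quotient_pgroup // => dG.
by rewrite -quotientR // -quotient_Mho // quotientS.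
Qed.

Lemma powerful_Mho_commg (gT : finGroupType) (G : {group gT}) :
  p.-group G -> powerful p G -> [~: 'Mho^1(G), G] \subset 'Mho^1('Mho^1(G)).
Proof.
move=> pG powG; have nWG : G \subset 'N('Mho^1('Mho^1(G))).
  exact: gFnorm_trans (gFnorm _ G).
rewrite -quotient_cents2 ?gFsub_trans // quotient_Mho //.
apply: Mho1_central; rewrite ?quotient_pgroup ?quotient_powerful //.
by rewrite -!quotient_Mho ?gFsub_trans // trivg_quotient.
Qed.

Lemma powerful_Mho (gT : finGroupType) (G : {group gT}) :
  p.-group G -> powerful p G -> powerful p 'Mho^1(G).
Proof.
move=> pG powG; rewrite powerfulE ?(pgroupS (Mho_sub 1 G)) //.
exact: subset_trans (commgS _ (Mho_sub 1 G)) (powerful_Mho_commg pG powG).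
Qed.

Lemma powerful_expgMn (gT : finGroupType) (G : {group gT}) :
    p.-group G -> powerful p G -> 'Mho^1('Mho^1(G)) = 1 ->
  {in G &, forall x y, (x * y) ^+ p = x ^+ p * y ^+ p}.
Proof.
move=> pG powG M2 x y Gx Gy; have cMG := Mho1_central pG powG M2.
have Myx : [~ y, x] \in 'Mho^1(G).
  by move: powG; rewrite powerfulE // => /subsetP-> //; rewrite mem_commg.
have /centP cyx := subsetP cMG _ Myx.
rewrite expgMp_Rcomm //; [exact/commute_sym/cyx | exact/commute_sym/cyx |].
exact: Mho1_eq1_expg (pgroupS (Mho_sub 1 G) pG) M2 _ Myx.
Qed.

Lemma powerful_expgM_mod (gT : finGroupType) (G : {group gT}) :
    p.-group G -> powerful p G ->
  {in G &, forall x y,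
     exists2 w, w \in 'Mho^1('Mho^1(G)) & x ^+ p * y ^+ p = w * (x * y) ^+ p}.
Proof.
move=> pG powG x y Gx Gy; have nWG : G \subset 'N('Mho^1('Mho^1(G))).
  exact: gFnorm_trans (gFnorm _ G).
have [Nx Ny] := (subsetP nWG x Gx, subsetP nWG y Gy).
apply: kercoset_rcoset; rewrite ?groupM ?groupX ?groupM //.
rewrite morphM ?groupX // !morphX ?groupM // morphM //.
rewrite (@powerful_expgMn _ (G / _)%G) ?mem_quotient //;
  rewrite ?quotient_pgroup ?quotient_powerful //.
by rewrite -!quotient_Mho ?gFsub_trans // trivg_quotient.
Qed.

Lemma Mho1E_expg_closed (gT : finGroupType) (K : {group gT}) :
    p.-group K -> {in K &, forall a b, exists2 c, c \in K & a ^+ p * b ^+ p = c ^+ p} ->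
  'Mho^1(K) = [set x ^+ p | x in K].
Proof.
move=> pK clK; rewrite (MhoE 1 pK) expn1 gen_set_id //; apply/group_setP; split.
  by apply/imsetP; exists 1; rewrite ?expg1n.
move=> _ _ /imsetP[a Ka ->] /imsetP[b Kb ->].
by have [c Kc ->] := clK a b Ka Kb; apply: imset_f.
Qed.

Lemma powerful_join_cycle_Mho (gT : finGroupType) (G : {group gT}) v :
  p.-group G -> powerful p G -> v \in G -> powerful p (<[v]> <*> 'Mho^1(G)).
Proof.
move=> pG powG Gv; set K := 'Mho^1(G); set W := 'Mho^1(K).
have nWG : G \subset 'N(W) by exact: gFnorm_trans (gFnorm _ G).
have sHG : <[v]> <*> K \subset G by rewrite join_subG cycle_subG Gv Mho_sub.
have cKW : K / W \subset 'C(G / W) by apply/quotient_cents2r/powerful_Mho_commg.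
rewrite powerfulE ?(pgroupS sHG) // (subset_trans _ (MhoS 1 (joing_subr _ _))) //.
apply: der1_min; first exact: subset_trans sHG nWG.
rewrite quotientY ?(subset_trans _ nWG) ?cycle_subG ?Mho_sub // abelianY.
rewrite quotient_abelian ?cycle_abelian //=; apply/andP; split.
  exact: subset_trans cKW (centS (quotientS W (Mho_sub 1 G))).
by apply: subset_trans cKW (centS _); rewrite quotientS ?cycle_subG.
Qed.

Lemma powerful_expgM_closed (gT : finGroupType) (G : {group gT}) :
    p.-group G -> powerful p G ->
  {in G &, forall a b, exists2 c, c \in G & a ^+ p * b ^+ p = c ^+ p}.
Proof.
have [n leGn] := ubnP #|G|; elim: n G leGn => // n IHn G /ltnSE leGn.
move=> pG powG a b Ga Gb; have [G1 | ntG] := eqsVneq G 1.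
  move: Ga Gb; rewrite G1 => /set1gP-> /set1gP->.
  by exists 1; rewrite ?expg1n ?mulg1.
set K := 'Mho^1(G); have sKG : K \subset G := Mho_sub 1 G.
have pK := pgroupS sKG pG.
have ltKG : #|K| < #|G| := proper_card (Mho1_proper pG ntG).
have defMK : 'Mho^1(K) = [set u ^+ p | u in K].
  exact: Mho1E_expg_closed pK (IHn K (leq_trans ltKG leGn) pK (powerful_Mho pG powG)).
have [w + ->] := powerful_expgM_mod pG powG Ga Gb.
rewrite defMK => /imsetP[u Ku ->]; set v := a * b; have Gv : v \in G := groupM Ga Gb.
have Gu : u \in G := subsetP sKG u Ku.
have [defG | neHG] := eqVneq (<[v]> <*> K) G.
  have /centsP cGG : abelian G by rewrite -(cycle_join_Mho1 pG defG) cycle_abelian.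
  by exists (u * v); rewrite ?groupM // (expgMn _ (cGG u Gu v Gv)).
have sHG : <[v]> <*> K \subset G by rewrite join_subG cycle_subG Gv.
have ltHG : #|<[v]> <*> K| < #|G| by rewrite proper_card // properEneq neHG.
have Hu : u \in <[v]> <*> K by rewrite (subsetP (joing_subr _ _)).
have Hv : v \in <[v]> <*> K by rewrite (subsetP (joing_subl _ _)) ?cycle_id.
have [c Hc ->] := IHn _ (leq_trans ltHG leGn) (pgroupS sHG pG)
  (powerful_join_cycle_Mho pG powG Gv) u v Hu Hv.
by exists c; rewrite ?(subsetP sHG).
Qed.

End PowerfulGroups.

Theorem lemma3p4 (gT : finGroupType) (p : nat) (G : {group gT}) :
  prime p -> odd p -> p.-group G -> quasi_powerful p G ->
  forall g h, g \in G -> h \in G ->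
  exists j, exists z, [/\ j \in G, z \in 'Z(G) & g ^+ p * h ^+ p = j ^+ p * z].
Proof.
move=> p_pr p_odd pG qpG g h Gg Gh.
have /subsetP nZG : G \subset 'N('Z(G)) := gFnorm _ G.
have [_ /morphimP[j Nj Gj ->] eqQ] := powerful_expgM_closed p_pr p_odd
  (quotient_pgroup _ pG) qpG (mem_quotient _ Gg) (mem_quotient _ Gh).
have [z Zz ->] : exists2 z, z \in 'Z(G) & g ^+ p * h ^+ p = z * j ^+ p.
  apply: kercoset_rcoset; rewrite ?groupM ?groupX ?nZG //.
  by rewrite morphM ?groupX ?nZG // !morphX ?nZG // eqQ.
by exists j, z; split=> //; apply/esym/(centerC (groupX p Gj)).
Qed.
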